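(* Let $(X,(\cdot,\cdot|\cdot))$ be a 2-inner product space over $\mathbb{K}\in\{\mathbb{R},\mathbb{C}\}$, let $n$ be a positive integer, let $z_1,\dots,z_n,z\in X$ and $\mu_1,\dots,\mu_n\in\mathbb{K}$. Then \[ \Big\|\sum_{i=1}^n\mu_iz_i\,\Big|\,z\Big\|^2\le \sum_{i=1}^n|\mu_i|^2\max_{1\le i\le n}\|z_i|z\|^2+\Big[\Big(\sum_{i=1}^n|\mu_i|^2\Big)^2-\sum_{i=1}^n|\mu_i|^4\Big]^{1/2}\Big(\sum_{1\le i\ne j\le n}|(z_i,z_j|z)|^2\Big)^{1/2} \] \[ \le \sum_{i=1}^n|\mu_i|^2\left\{\max_{1\le i\le n}\|z_i|z\|^2+\Big(\sum_{1\le i\ne j\le n}|(z_i,z_j|z)|^2\Big)^{1/2}\right\}. \]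
   Context: A 2-inner product on a linear space $X$ of dimension greater than $1$ over $\mathbb{K}$ ($\mathbb{K}=\mathbb{R}$ or $\mathbb{C}$) is a function $(\cdot,\cdot|\cdot):X\times X\times X\to\mathbb{K}$ such that for all $x,x',y,z\in X$ and $\alpha\in\mathbb{K}$: (i) $(x,x|z)\ge 0$, and $(x,x|z)=0$ iff $x$ and $z$ are linearly dependent; (ii) $(x,x|z)=(z,z|x)$; (iii) $(y,x|z)=\overline{(x,y|z)}$; (iv) $(\alpha x,y|z)=\alpha(x,y|z)$; (v) $(x+x',y|z)=(x,y|z)+(x',y|z)$. The associated 2-norm is $\|x|z\|=\sqrt{(x,x|z)}$. The sum $\sum_{1\le i\ne j\le n}$ runs over all ordered pairs $(i,j)$ with $i\ne j$. *)

(* The scalar field K is either a real closed field R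
   (real case, conjugation = identity, sqrt = Num.sqrt) or its complex
   closure R[i] = complex R (complex case, conjugation = Num.conj,
   sqrt = sqrtC). *)
From HB Require Import structures.
From mathcomp Require Import all_boot all_order all_algebra.
From mathcomp Require Import complex.
Set Implicit Arguments. Unset Strict Implicit. Unset Printing Implicit Defensive.
Import Order.TTheory GRing.Theory Num.Theory.
Local Open Scope ring_scope.

Definition lin_dep (K : numFieldType) (X : lmodType K) (x z : X) : Prop :=
  exists a b : K, (a != 0 \/ b != 0) /\ a *: x + b *: z = 0.

Definition dim_gt1 (K : numFieldType) (X : lmodType K) : Prop :=
  exists x z : X, ~ lin_dep x z.

Definition is_2inner_product (K : numFieldType) (conjK : K -> K)
    (X : lmodType K) (ip : X -> X -> X -> K) : Prop :=
  [/\ (forall x z : X, 0 <= ip x x z /\ (ip x x z = 0 <-> lin_dep x z)),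
      (forall x z : X, ip x x z = ip z z x),
      (forall x y z : X, ip y x z = conjK (ip x y z)),
      (forall (a : K) (x y z : X), ip (a *: x) y z = a * ip x y z) &
      (forall x x' y z : X, ip (x + x') y z = ip x y z + ip x' y z)].

Definition norm2 (K : numFieldType) (sqrtK : K -> K) (X : lmodType K)
    (ip : X -> X -> X -> K) (x z : X) : K := sqrtK (ip x x z).

Definition cor23_ineq (K : numFieldType) (sqrtK : K -> K) (X : lmodType K)
    (ip : X -> X -> X -> K) (n : nat) (zs : 'I_n -> X) (z : X)
    (mu : 'I_n -> K) : Prop :=
  let M := \big[Num.max/0]_(i < n) (norm2 sqrtK ip (zs i) z) ^+ 2 in
  let S2 := \sum_(i < n) `|mu i| ^+ 2 in
  let S4 := \sum_(i < n) `|mu i| ^+ 4 in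
  let C := \sum_(i < n) \sum_(j < n | i != j) `|ip (zs i) (zs j) z| ^+ 2 in
  (norm2 sqrtK ip (\sum_(i < n) mu i *: zs i) z) ^+ 2
    <= S2 * M + sqrtK (S2 ^+ 2 - S4) * sqrtK C
  /\ S2 * M + sqrtK (S2 ^+ 2 - S4) * sqrtK C <= S2 * (M + sqrtK C).

From HB Require Import structures.
From mathcomp Require Import all_boot all_order all_algebra.
From mathcomp Require Import complex ring.
Import Order.TTheory GRing.Theory Num.Theory.
Local Open Scope ring_scope.

(* Only the fact that (x, y) |-> (x, y|z) is a positive semidefinite
   Hermitian form is used. Expanding ||sum_i mu_i z_i | z||^2 splits it into
   the diagonal part sum_i |mu_i|^2 ||z_i|z||^2, at most
   (sum_i |mu_i|^2) max_i ||z_i|z||^2, and the off-diagonal part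
   sum_(i<>j) mu_i conj(mu_j) (z_i, z_j|z). The latter is real, and Cauchy-Schwarz
   over the pairs i <> j bounds it by the product of the square roots of
   sum_(i<>j) |mu_i|^2 |mu_j|^2 = (sum_i |mu_i|^2)^2 - sum_i |mu_i|^4 and of
   sum_(i<>j) |(z_i, z_j|z)|^2. The second inequality only uses that the
   former square root is at most sum_i |mu_i|^2.
   Both scalar fields are treated at once: conjugation is an abstract ring
   morphism (the identity over R) and the square root any function with
   0 <= sqrt x and sqrt x ^+ 2 = x for 0 <= x. *)

Lemma lagrange_identity (R : comPzRingType) (I : finType) (P : pred I) (a b : I -> R) :
  \sum_(i | P i) \sum_(j | P j) (a i * b j - a j * b i) ^+ 2 =
  2 * ((\sum_(i | P i) a i ^+ 2) * (\sum_(i | P i) b i ^+ 2)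
       - (\sum_(i | P i) a i * b i) ^+ 2).
Proof.
pose f i j := a i ^+ 2 * b j ^+ 2 - a i * b i * (a j * b j).
have sqr_f i j : (a i * b j - a j * b i) ^+ 2 = f i j + f j i by rewrite /f; ring.
have mulr_sum2 (F G : I -> R) : (\sum_(i | P i) F i) * (\sum_(j | P j) G j) =
    \sum_(i | P i) \sum_(j | P j) F i * G j.
  by rewrite mulr_suml; apply: eq_bigr => i _; rewrite mulr_sumr.
have -> : (\sum_(i | P i) a i ^+ 2) * (\sum_(i | P i) b i ^+ 2)
    - (\sum_(i | P i) a i * b i) ^+ 2 = \sum_(i | P i) \sum_(j | P j) f i j.
  by rewrite expr2 !mulr_sum2 -sumrB; apply: eq_bigr => i _; rewrite -sumrB.
under eq_bigr do under eq_bigr do rewrite sqr_f.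
under eq_bigr do rewrite big_split /=.
by rewrite big_split /= [X in _ + X]exchange_big /= mulr2n mulrDl mul1r.
Qed.

Lemma real_cauchy_schwarz (R : numDomainType) (I : finType) (P : pred I) (a b : I -> R) :
  (forall i, a i \is Num.real) -> (forall i, b i \is Num.real) ->
  (\sum_(i | P i) a i * b i) ^+ 2 <=
  (\sum_(i | P i) a i ^+ 2) * (\sum_(i | P i) b i ^+ 2).
Proof.
move=> aR bR; rewrite -subr_ge0 -(pmulr_rge0 _ (ltr0Sn R 1)) -lagrange_identity.
apply: sumr_ge0 => i _; apply: sumr_ge0 => j _.
by rewrite -realEsqr rpredB // rpredM.
Qed.

Lemma sqr_sum_offdiag (R : pzSemiRingType) (I : finType) (a : I -> R) :
  (\sum_i a i) ^+ 2 = \sum_i a i ^+ 2 + \sum_i \sum_(j | i != j) a i * a j.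
Proof.
rewrite expr2 mulr_suml -big_split /=; apply: eq_bigr => i _.
by rewrite mulr_sumr (bigD1 i) //=; under eq_bigl do rewrite eq_sym.
Qed.

Lemma real_le_bigmax (R : numDomainType) (I : eqType) (r : seq I) (x0 : R)
    (f : I -> R) i :
  x0 \is Num.real -> (forall j, f j \is Num.real) -> i \in r ->
  f i <= \big[Num.max/x0]_(j <- r) f j.
Proof.
move=> x0R fR; elim: r => [|x r IHr] //; rewrite big_cons inE comparable_le_max.
  by case/orP=> [/eqP-> | /IHr->]; rewrite ?lexx ?orbT.
by rewrite real_comparable // bigmax_real.
Qed.

Section AbstractSqrt.
Variables (K : numDomainType) (sqrtK : K -> K).
Hypotheses (sqrtK_ge0 : forall x, 0 <= x -> 0 <= sqrtK x)
  (sqrtKK : forall x, 0 <= x -> sqrtK x ^+ 2 = x).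

Lemma sqrtK_le x y : 0 <= x -> 0 <= y -> x <= y ^+ 2 -> sqrtK x <= y.
Proof.
by move=> x0 y0 le_xy2; rewrite -ler_sqr ?nnegrE ?sqrtK_ge0 // sqrtKK.
Qed.

Lemma le_sqrtKM x A B : 0 <= x -> 0 <= A -> 0 <= B -> x ^+ 2 <= A * B ->
  x <= sqrtK A * sqrtK B.
Proof.
move=> x0 A0 B0 le_x2AB.
by rewrite -ler_sqr ?nnegrE ?mulr_ge0 ?sqrtK_ge0 // exprMn !sqrtKK.
Qed.

Lemma norm_sum_mul_le (I : finType) (P : pred I) (c g : I -> K) :
  `|\sum_(i | P i) c i * g i| <=
  sqrtK (\sum_(i | P i) `|c i| ^+ 2) * sqrtK (\sum_(i | P i) `|g i| ^+ 2).
Proof.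
apply: le_trans (ler_norm_sum _ _ _) _; under eq_bigr do rewrite normrM.
apply: le_sqrtKM; do ?[by apply: sumr_ge0 => i _; rewrite ?mulr_ge0 ?exprn_ge0].
by apply: real_cauchy_schwarz => i; apply: normr_real.
Qed.

Lemma sqr_sum_sub_sum_sqr (I : finType) (mu : I -> K) :
  (\sum_i `|mu i| ^+ 2) ^+ 2 - \sum_i `|mu i| ^+ 4 =
  \sum_i \sum_(j | i != j) `|mu i| ^+ 2 * `|mu j| ^+ 2.
Proof.
have -> : \sum_i `|mu i| ^+ 4 = \sum_i (`|mu i| ^+ 2) ^+ 2.
  by apply: eq_bigr => i _; rewrite -exprM.
by rewrite sqr_sum_offdiag [X in X - _]addrC addrK.
Qed.

Lemma sqrtK_sqr_sum_sub_le (I : finType) (mu : I -> K) :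
  sqrtK ((\sum_i `|mu i| ^+ 2) ^+ 2 - \sum_i `|mu i| ^+ 4) <= \sum_i `|mu i| ^+ 2.
Proof.
apply: sqrtK_le; last by rewrite lerBlDr lerDl sumr_ge0 // => i _; rewrite exprn_ge0.
  by rewrite sqr_sum_sub_sum_sqr; do 2 apply: sumr_ge0 => ? _; rewrite mulr_ge0 ?exprn_ge0.
by apply: sumr_ge0 => i _; rewrite exprn_ge0.
Qed.

Section HermitianForm.
Variables (conjK : {rmorphism K -> K}) (X : lmodType K) (form : X -> X -> K).
Hypotheses (norm_conjK : forall a, `|conjK a| = `|a|)
  (mulr_conjK : forall a, a * conjK a = `|a| ^+ 2)
  (form_ge0 : forall x, 0 <= form x x)
  (form_conj : forall x y, form y x = conjK (form x y))
  (formZl : forall a x y, form (a *: x) y = a * form x y)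
  (formDl : forall x x' y, form (x + x') y = form x y + form x' y).

Lemma form0l y : form 0 y = 0.
Proof. by rewrite -(scale0r 0) formZl mul0r. Qed.

Lemma form_suml (I : finType) (F : I -> X) y :
  form (\sum_i F i) y = \sum_i form (F i) y.
Proof. exact: (big_morph (form^~ y) (fun x x' => formDl x x' y) (form0l y)). Qed.

Lemma form_sumr (I : finType) (F : I -> X) x :
  form x (\sum_i F i) = \sum_i form x (F i).
Proof.
by rewrite form_conj form_suml rmorph_sum; under eq_bigr do rewrite -form_conj.
Qed.

Lemma formZr a x y : form x (a *: y) = conjK a * form x y.
Proof. by rewrite form_conj formZl rmorphM -form_conj. Qed.

Variables (I : finType) (mu : I -> K) (zs : I -> X).

Lemma form_expand :
  form (\sum_i mu i *: zs i) (\sum_i mu i *: zs i) =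
  \sum_i `|mu i| ^+ 2 * form (zs i) (zs i) +
  \sum_i \sum_(j | i != j) mu i * conjK (mu j) * form (zs i) (zs j).
Proof.
rewrite form_suml -big_split /=; apply: eq_bigr => i _.
rewrite formZl form_sumr (bigD1 i) //= formZr mulrDr mulrA mulr_conjK mulr_sumr.
by congr (_ + _); apply: eq_big => [j | j _]; rewrite 1?eq_sym // formZr mulrA.
Qed.

Local Notation S2 := (\sum_i `|mu i| ^+ 2).
Local Notation S4 := (\sum_i `|mu i| ^+ 4).
Local Notation M := (\big[Num.max/0]_i form (zs i) (zs i)).
Local Notation C := (\sum_i \sum_(j | i != j) `|form (zs i) (zs j)| ^+ 2).

Lemma sum_offdiag_weights :
  \sum_i \sum_(j | i != j) `|mu i * conjK (mu j)| ^+ 2 = S2 ^+ 2 - S4.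
Proof.
rewrite sqr_sum_sub_sum_sqr; apply: eq_bigr => i _; apply: eq_bigr => j _.
by rewrite normrM norm_conjK exprMn.
Qed.

Lemma form_combination_le :
  form (\sum_i mu i *: zs i) (\sum_i mu i *: zs i) <=
  S2 * M + sqrtK (S2 ^+ 2 - S4) * sqrtK C.
Proof.
rewrite form_expand.
set D := \sum_i `|mu i| ^+ 2 * _.
set O := \sum_i \sum_(j | _) _.
have D_ge0 : 0 <= D by apply: sumr_ge0 => i _; rewrite mulr_ge0 ?exprn_ge0.
have D_le : D <= S2 * M.
  rewrite mulr_suml; apply: ler_sum => i _; rewrite ler_wpM2l ?exprn_ge0 //.
  by apply: real_le_bigmax; rewrite ?mem_index_enum // => j; apply: ger0_real.
have O_real : O \is Num.real.
  have -> : O = form (\sum_i mu i *: zs i) (\sum_i mu i *: zs i) - D.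
    by rewrite form_expand addrC addKr.
  by rewrite rpredB ?ger0_real.
apply: lerD D_le (le_trans (real_ler_norm O_real) _).
rewrite /O -sum_offdiag_weights !pair_big_dep /=.
exact: norm_sum_mul_le.
Qed.

End HermitianForm.

End AbstractSqrt.

Section TwoInnerProduct.
Variables (K : numFieldType) (sqrtK : K -> K) (conjK : {rmorphism K -> K}).
Variables (X : lmodType K) (ip : X -> X -> X -> K).
Hypotheses (sqrtK_ge0 : forall x, 0 <= x -> 0 <= sqrtK x)
  (sqrtKK : forall x, 0 <= x -> sqrtK x ^+ 2 = x)
  (norm_conjK : forall a, `|conjK a| = `|a|)
  (mulr_conjK : forall a, a * conjK a = `|a| ^+ 2)
  (ip_2inner : is_2inner_product (conjK : K -> K) ip).

Lemma cor23_ineq_2inner_product n (zs : 'I_n -> X) (z : X) (mu : 'I_n -> K) :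
  cor23_ineq sqrtK ip zs z mu.
Proof.
have [ip_ge0 _ ip_conj ipZl ipDl] := ip_2inner.
have sqr_norm2 x : norm2 sqrtK ip x z ^+ 2 = ip x x z by apply/sqrtKK/(ip_ge0 x z).1.
rewrite /cor23_ineq /= sqr_norm2.
have -> : \big[Num.max/0]_(i < n) norm2 sqrtK ip (zs i) z ^+ 2 =
    \big[Num.max/0]_(i < n) ip (zs i) (zs i) z by apply: eq_bigr.
split.
  apply: (@form_combination_le _ _ sqrtK_ge0 sqrtKK conjK X (fun x y => ip x y z)) => // x.
  exact: (ip_ge0 x z).1.
rewrite mulrDr lerD2l ler_wpM2r ?sqrtK_ge0 ?sqrtK_sqr_sum_sub_le //.
by do 2 apply: sumr_ge0 => ? _; rewrite exprn_ge0.
Qed.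

End TwoInnerProduct.

Local Open Scope complex_scope.

Theorem corollary2p3 :
  (* real case: K = R *)
  (forall (R : rcfType) (X : lmodType R) (ip : X -> X -> X -> R),
      dim_gt1 X -> is_2inner_product id ip ->
      forall (n : nat) (zs : 'I_n -> X) (z : X) (mu : 'I_n -> R),
        (0 < n)%N -> cor23_ineq Num.sqrt ip zs z mu)
  /\
  (* complex case: K = R[i] *)
  (forall (R : rcfType) (X : lmodType R[i]) (ip : X -> X -> X -> R[i]),
      dim_gt1 X -> is_2inner_product Num.conj ip ->
      forall (n : nat) (zs : 'I_n -> X) (z : X) (mu : 'I_n -> R[i]),
        (0 < n)%N -> cor23_ineq sqrtC ip zs z mu).
Proof.
split=> R X ip _ ip_2inner n zs z mu _.
  apply: (@cor23_ineq_2inner_product R Num.sqrt idfun X ip) => //.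
  - by move=> x _; rewrite sqrtr_ge0.
  - by move=> x x_ge0; rewrite sqr_sqrtr.
  - by move=> a; rewrite real_normK ?num_real.
apply: (@cor23_ineq_2inner_product _ sqrtC Num.conj X ip) => //.
- by move=> x; rewrite sqrtC_ge0.
- by move=> x _; rewrite sqrtCK.
- exact: norm_conjC.
- by move=> a; rewrite normCK.
Qed.
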